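(* Let $F,G:[0,T]\to\mathbb{R}^{D\times D}$ be continuous, and let $\Psi(t,s)$ be the transition matrix of $F$. Let $\Sigma_\tau$ solve $\frac{d\Sigma_\tau}{d\tau}=F_\tau\Sigma_\tau+\Sigma_\tau F_\tau^T+G_\tau G_\tau^T$, and let $I\subseteq[0,T]$ be an interval on which $\Sigma_\tau$ is positive definite. Let $R_\tau$ be continuously differentiable and invertible on $I$ with $R_\tau R_\tau^T=\Sigma_\tau$ and $\frac{dR_\tau}{d\tau}=(F_\tau+\tfrac12G_\tau G_\tau^T\Sigma_\tau^{-1})R_\tau$. Take $\lambda=0$: let $\hat\Psi$ be the transition matrix of $\hat F_\tau=F_\tau+\tfrac12G_\tau G_\tau^T\Sigma_\tau^{-1}$, and let $P_{s\tau}$ solve $\frac{dP_{s\tau}}{d\tau}=\hat F_\tau P_{s\tau}+P_{s\tau}\hat F_\tau^T$ with $P_{ss}=0$. Then for all $s,t\in I$, all $u(s)\in\mathbb{R}^D$ and all $\epsilon\in\mathbb{R}^D$, we have $P_{st}=0$ and $$\Psi(t,s)u(s)+[\hat\Psi(t,s)-\Psi(t,s)]R_s\epsilon=\Psi(t,s)u(s)+\Big[\int_s^t\tfrac12\Psi(t,\tau)G_\tau G_\tau^TR_\tau^{-T}\,d\tau\Big]\epsilon.$$ That is, the stochastic generalized-DDIM update $u(t)\sim\mathcal{N}(\Psi(t,s)u(s)+[\hat\Psi(t,s)-\Psi(t,s)]R_s\epsilon,P_{st})$ reduces to the deterministic generalized-DDIM update $u(t)=\Psi(t,s)u(s)+[\int_s^t\tfrac12\Psi(t,\tau)G_\tau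 G_\tau^TR_\tau^{-T}d\tau]\epsilon$.
   Context: The transition matrix $\Psi$ of $F$ satisfies $\partial_t\Psi(t,s)=F_t\Psi(t,s)$ with $\Psi(s,s)=I_D$, and similarly for $\hat\Psi$ with $\hat F$. The vector $\epsilon$ plays the role of the network output $\epsilon_\theta(u(s),s)$. *)

From HB Require Import structures.
From mathcomp Require Import all_boot all_order all_algebra.
From mathcomp Require Import all_classical all_reals all_analysis.
Set Implicit Arguments. Unset Strict Implicit. Unset Printing Implicit Defensive.
Import Order.TTheory GRing.Theory Num.Theory.
Import numFieldNormedType.Exports.
Local Open Scope classical_set_scope.
Local Open Scope ring_scope.

(* Derivative of a vector-valued function of a real variable relative to a
   set A (one-sided at endpoints of an interval): the difference quotients
   h^-1 (f(x+h) - f x), for h -> 0, h <> 0, x + h in A, converge to df. *)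
Definition has_deriv_within {R : realType} {V : normedModType R}
  (A : set R) (f : R -> V) (x : R) (df : V) : Prop :=
  (fun h : R => h^-1 *: (f (x + h) - f x))
    @ within (fun h => A (x + h)) (0 : R)^' --> df.

Definition oint {R : realType} (a b : R) (g : R -> R) : R :=
  if a <= b then (\int[lebesgue_measure]_(x in `[a, b]) g x)%R
  else (- \int[lebesgue_measure]_(x in `[b, a]) g x)%R.

Definition mxint {R : realType} {m n : nat} (a b : R)
  (f : R -> 'M[R]_(m, n)) : 'M[R]_(m, n) :=
  \matrix_(i, j) oint a b (fun x => f x i j).

Definition posdef {R : realType} {n : nat} (A : 'M[R]_n) : Prop :=
  A^T = A /\ forall v : 'cV[R]_n, v != 0 -> 0 < (v^T *m A *m v) 0 0.

From HB Require Import structures.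
From mathcomp Require Import all_boot all_order all_algebra.
From mathcomp Require Import all_classical all_reals all_analysis.
From mathcomp Require Import lra.
Import Order.TTheory GRing.Theory Num.Theory.
Import numFieldNormedType.Exports.
Local Open Scope classical_set_scope.
Local Open Scope ring_scope.
Set Implicit Arguments.
Unset Strict Implicit.
Unset Printing Implicit Defensive.

(** Every process in the statement solves a linear matrix ODE whose
    coefficient is continuous on an interval, and such a solution vanishes
    identically once it vanishes at one time: on a short segment the mean
    value theorem bounds the sup norm of the solution by a fraction of
    itself.  This gives [P_{s t} = 0], the cocycle property of [Psi], and
    [R_t = Psihat(t,s) R_s].  As [R' = (F + B) R] with
    [B = 1/2 G G^T Sigma^-1], variation of constants yields
    [R_t - Psi(t,s) R_s = \int_s^t Psi(t,tau) B_tau R_tau dtau]; here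
    [Psi(t,y) = Psi(t,tau) Psi(y,tau)^-1] shows that [Psi(t,.)] has
    derivative [-Psi(t,.) F].  Finally [Sigma^-1 R = R^-T] turns the
    integrand into the one of the statement. *)

Section matrix_limits.
Context {R : realFieldType} {T : Type} {F : set_system T} {FF : Filter F}.

Lemma cvg_mxP m n (f : T -> 'M[R]_(m, n)) (L : 'M[R]_(m, n)) :
  f @ F --> L <-> forall i j, (fun x => f x i j) @ F --> L i j.
Proof.
split=> [fL i j|fL].
  exact: cvg_comp _ _ fL (@coord_continuous R m n i j L).
apply/cvgrPdist_lt => e e0.
have : \forall x \near F,
    forall ij : 'I_m * 'I_n, `|L ij.1 ij.2 - f x ij.1 ij.2| < e.
  apply: filter_forall => -[i j].
  exact: (proj1 (cvgrPdist_lt _ _) (fL i j) e e0).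
apply: filterS => x fxL; rewrite [X in X < _]/Num.Def.normr /= mx_normrE.
by apply: bigmax_lt => // ij _; rewrite !mxE; exact: fxL.
Qed.

Lemma cvg_mulmx m n p (f : T -> 'M[R]_(m, n)) (g : T -> 'M[R]_(n, p))
    (A : 'M[R]_(m, n)) (B : 'M[R]_(n, p)) :
  f @ F --> A -> g @ F --> B -> (fun x => f x *m g x) @ F --> A *m B.
Proof.
move=> /cvg_mxP fA /cvg_mxP gB; apply/cvg_mxP => i j.
rewrite mxE (_ : (fun x => _) = fun x => \sum_k f x i k * g x k j).
  by apply: cvg_big => [|k _]; [exact: add_continuous | exact: cvgM].
by apply/funext => x; rewrite mxE.
Qed.

Lemma cvg_trmx m n (f : T -> 'M[R]_(m, n)) (A : 'M[R]_(m, n)) :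
  f @ F --> A -> (fun x => (f x)^T) @ F --> A^T.
Proof.
move=> /cvg_mxP fA; apply/cvg_mxP => i j.
rewrite mxE (_ : (fun x => _) = fun x => f x j i) //.
by apply/funext => x; rewrite mxE.
Qed.

Lemma cvg_det n (f : T -> 'M[R]_n) (A : 'M[R]_n) :
  f @ F --> A -> (fun x => \det (f x)) @ F --> \det A.
Proof.
move=> /cvg_mxP fA; apply: cvg_big => [|s _]; first exact: add_continuous.
apply: cvgM; first exact: cvg_cst.
by apply: cvg_big => //; exact: mul_continuous.
Qed.

Lemma cvg_adj n (f : T -> 'M[R]_n) (A : 'M[R]_n) :
  f @ F --> A -> (fun x => \adj (f x)) @ F --> \adj A.
Proof.
move=> /cvg_mxP fA; apply/cvg_mxP => i j.
rewrite mxE (_ : (fun x => _) =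
    fun x => (-1) ^+ (j + i) * \det (row' j (col' i (f x)))).
  apply: cvgM; first exact: cvg_cst.
  apply: cvg_det; apply/cvg_mxP => k l; rewrite !mxE.
  by rewrite (_ : (fun x => _) = fun x => f x (lift j k) (lift i l)) //;
    apply/funext => x; rewrite !mxE.
by apply/funext => x; rewrite mxE.
Qed.

Lemma near_unitmx n (f : T -> 'M[R]_n) (A : 'M[R]_n) :
  f @ F --> A -> A \in unitmx -> \forall x \near F, f x \in unitmx.
Proof.
rewrite unitmxE unitfE => fA detA0.
have := @cvgr_neq0 _ _ _ _ FF _ _ (cvg_det fA) detA0.
by apply: filterS => x; rewrite unitmxE unitfE.
Qed.

Lemma cvg_invmx n (f : T -> 'M[R]_n) (A : 'M[R]_n) :
  f @ F --> A -> A \in unitmx -> (fun x => invmx (f x)) @ F --> invmx A.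
Proof.
move=> fA uA; rewrite {2}/invmx uA.
apply: cvg_trans (near_eq_cvg _) _ => [|/=].
  by apply: filterS (near_unitmx fA uA) => x ufx; rewrite /invmx ufx.
apply: cvgZ; last exact: cvg_adj.
by apply: cvgV; [rewrite -unitfE -unitmxE | exact: cvg_det].
Qed.

End matrix_limits.

Section matrix_norm.
Context {R : realDomainType}.

Lemma ler_mx_norm_entry m n (M : 'M[R]_(m, n)) i j : `|M i j| <= `|M|.
Proof.
rewrite [leRHS]/Num.Def.normr /= mx_normrE.
exact: (le_bigmax _ (fun ij : 'I_m * 'I_n => `|M ij.1 ij.2|) (i, j)).
Qed.

Lemma mx_norm_le m n (M : 'M[R]_(m, n)) c :
  0 <= c -> (forall i j, `|M i j| <= c) -> `|M| <= c.
Proof.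
move=> c0 Mc; rewrite [leLHS]/Num.Def.normr /= mx_normrE.
by apply: bigmax_le => // -[i j] _; exact: Mc.
Qed.

Lemma mx_norm_mulmx m n p (A : 'M[R]_(m, n)) (B : 'M[R]_(n, p)) :
  `|A *m B| <= n%:R * `|A| * `|B|.
Proof.
apply: mx_norm_le => [|i j]; first by rewrite !mulr_ge0.
rewrite mxE; apply: le_trans (ler_norm_sum _ _ _) _.
rewrite -mulrA -[n in n%:R]card_ord -sumr_const mulr_suml.
apply: ler_sum => k _; rewrite normrM mul1r.
by apply: ler_pM; rewrite ?normr_ge0 ?ler_mx_norm_entry.
Qed.

Lemma mx_norm_trmx m n (A : 'M[R]_(m, n)) : `|A^T| <= `|A|.
Proof. by apply: mx_norm_le => // i j; rewrite mxE ler_mx_norm_entry. Qed.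

End matrix_norm.

Section derivative_within.
Context {R : realType}.
Local Notation dnbhs0_in A x := (within (fun h : R => A (x + h)) (0 : R)^').

Let dnbhs0_in_neq0 (A : set R) x : \forall h \near dnbhs0_in A x, h != 0.
Proof. exact: (cvg_within _) (nbhs_dnbhs_neq 0). Qed.

Let dnbhs0_in_cvg0 (A : set R) x : (fun h => h) @ dnbhs0_in A x --> (0 : R).
Proof. by apply: cvg_trans (cvg_within _) _; exact: cvg_within. Qed.

Section vector_valued.
Context {V : normedModType R}.
Implicit Types (A B : set R) (f g : R -> V).

Lemma has_deriv_within_shift_cvg A f x df :
  has_deriv_within A f x df -> (fun h => f (x + h)) @ dnbhs0_in A x --> f x.
Proof.
move=> fdf.
have : (fun h => f x + h *: (h^-1 *: (f (x + h) - f x))) @ dnbhs0_in A x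
    --> f x + 0 *: df.
  apply: cvgD; first exact: cvg_cst.
  by apply: cvgZ; [exact: dnbhs0_in_cvg0 | exact: fdf].
rewrite scale0r addr0; apply: cvg_trans; apply: near_eq_cvg.
apply: filterS (dnbhs0_in_neq0 A x) => h h0 /=.
by rewrite scalerA mulfV // scale1r addrC subrK.
Qed.

Lemma has_deriv_within_cvg A f x df :
  has_deriv_within A f x df -> f @ within A (nbhs x) --> f x.
Proof.
move=> /has_deriv_within_shift_cvg fx P Pfx.
have := fx P Pfx; rewrite !nbhs_simpl /= /within /= => Pf.
have {}Pf : \forall h \near 0, h != 0 -> A (x + h) -> P (f (x + h)) := Pf.
suff : \forall y \near x, A y -> P (f y) by [].
rewrite (near_shift 0 x); apply: filterS Pf => h /= Ph.
rewrite subr0 addrC; have [->|h0] := eqVneq h 0; last exact: Ph.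
by rewrite addr0 => _; exact: nbhs_singleton Pfx.
Qed.

Lemma has_deriv_within_continuous A f (df : R -> V) :
  (forall x, A x -> has_deriv_within A f x (df x)) -> {within A, continuous f}.
Proof.
move=> fdf; apply/subspace_continuousP => x Ax.
exact: has_deriv_within_cvg (fdf x Ax).
Qed.

Lemma has_deriv_within_subset A B f x df :
  B `<=` A -> has_deriv_within A f x df -> has_deriv_within B f x df.
Proof.
move=> BA; apply: cvg_trans; apply: cvg_app.
by apply: within_subset => h /=; exact: BA.
Qed.

Lemma has_deriv_within_eq A f g x df :
  A x -> {in A, f =1 g} ->
  has_deriv_within A f x df -> has_deriv_within A g x df.
Proof.
move=> Ax fg; apply: cvg_trans; apply: near_eq_cvg.
have : \forall h \near dnbhs0_in A x, A (x + h) by apply: withinT.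
by apply: filterS => h Axh; rewrite /= !fg ?inE.
Qed.

Lemma has_deriv_withinB A f g x df dg :
  has_deriv_within A f x df -> has_deriv_within A g x dg ->
  has_deriv_within A (fun t => f t - g t) x (df - dg).
Proof.
move=> fdf gdg; apply: cvg_trans (cvgB fdf gdg); apply: near_eq_cvg.
near=> h; rewrite !fctE -scalerBr; congr (_ *: _).
by rewrite !opprB addrACA [RHS]addrACA (addrC (- f x)).
Unshelve. all: by end_near.
Qed.

Lemma has_deriv_within_cst A (c : V) x : has_deriv_within A (fun _ => c) x 0.
Proof.
rewrite /has_deriv_within subrr.
by under eq_fun do rewrite scaler0; exact: cvg_cst.
Qed.

End vector_valued.

Section matrix_valued.
Implicit Types A : set R.

Lemma has_deriv_within_mulmx m n p A (f : R -> 'M[R]_(m, n))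
    (g : R -> 'M[R]_(n, p)) x df dg :
  has_deriv_within A f x df -> has_deriv_within A g x dg ->
  has_deriv_within A (fun t => f t *m g t) x (df *m g x + f x *m dg).
Proof.
move=> fdf gdg; apply: cvg_trans (cvgD (cvg_mulmx fdf
  (has_deriv_within_shift_cvg gdg)) (cvg_mulmx (cvg_cst (f x)) gdg)).
apply: near_eq_cvg; near=> h.
rewrite !fctE -scalemxAl -scalemxAr -scalerDr; congr (_ *: _).
by rewrite mulmxBl mulmxBr addrA subrK.
Unshelve. all: by end_near.
Qed.

Lemma has_deriv_within_entry m n A (f : R -> 'M[R]_(m, n)) x df i j :
  has_deriv_within A f x df -> has_deriv_within A (fun t => f t i j) x (df i j).
Proof.
move=> /cvg_mxP /(_ i j); apply: cvg_trans; apply: near_eq_cvg.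
by near=> h; rewrite !mxE.
Unshelve. all: by end_near.
Qed.

Lemma has_deriv_within_invmx n A (f : R -> 'M[R]_n) x df :
  f x \in unitmx -> has_deriv_within A f x df ->
  has_deriv_within A (fun t => invmx (f t)) x
    (- (invmx (f x) *m df *m invmx (f x))).
Proof.
move=> ufx fdf; have fx := has_deriv_within_shift_cvg fdf.
apply: cvg_trans (cvgN (cvg_mulmx (cvg_mulmx (cvg_invmx fx ufx) fdf)
  (cvg_cst (invmx (f x))))).
apply: near_eq_cvg; apply: filterS (near_unitmx fx ufx) => h ufxh /=.
rewrite !fctE -scalemxAr -scalemxAl -scalerN; congr (_ *: _).
by rewrite mulmxBr mulmxBl mulVmx // mul1mx mulmxK // opprB.
Qed.

End matrix_valued.

Lemma has_deriv_within_is_derive (A : set R) (f : R -> R) x df :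
  (\forall y \near x, A y) -> has_deriv_within A f x df -> is_derive x 1 f df.
Proof.
move=> Ax fdf.
suff : (fun h => h^-1 *: ((f \o shift x) (h *: 1) - f x)) @ 0^' --> df.
  by move=> fdf'; split; [apply/cvg_ex; exists df | exact: cvg_lim fdf'].
move=> P /fdf Pfdf.
have {}Pfdf : \forall h \near 0, h != 0 -> A (x + h) ->
  P (h^-1 *: (f (x + h) - f x)) := Pfdf.
have {}Ax : \forall h \near 0, A (x + h).
  move: Ax; rewrite (near_shift 0 x).
  by apply: filterS => h; rewrite /= subr0 addrC.
suff : \forall h \near 0,
  h != 0 -> P (h^-1 *: ((f \o shift x) (h *: 1) - f x)) by [].
apply: filterS2 Pfdf Ax => h Ph Axh h0.
by rewrite /= [h%:A]mulr1 (addrC h x); exact: Ph.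
Qed.

End derivative_within.

Lemma is_interval_min_max {R : realType} (J : set R) s t :
  is_interval J -> J s -> J t ->
  forall x, Num.min s t <= x <= Num.max s t -> J x.
Proof.
move=> J_itv Js Jt; apply: J_itv.
- by rewrite /Num.min; case: ifP.
- by rewrite /Num.max; case: ifP.
Qed.

Section ode_uniqueness.
Context {R : realType}.

Lemma ler_norm_sub_derive (g dg : R -> R) (a b M : R) :
  {within `[a, b], continuous g} ->
  (forall y, a < y < b -> is_derive y 1 g (dg y)) ->
  (forall y, a < y < b -> `|dg y| <= M) ->
  forall u v, a <= u <= b -> a <= v <= b -> `|g v - g u| <= M * `|v - u|.
Proof.
move=> gc gd dgM.
suff le_uv u v : a <= u -> u < v -> v <= b -> `|g v - g u| <= M * `|v - u|.
  move=> u v /andP[au ub] /andP[av vb].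
  case: (ltgtP u v) => [uv|vu|->]; first exact: le_uv.
  - by rewrite -normrN opprB -(normrN (v - u)) opprB; exact: le_uv.
  - by rewrite !subrr normr0 mulr0.
move=> au uv vb.
have sub_uv_ab : `[u, v] `<=` `[a, b].
  move=> y /=; rewrite !in_itv /= => /andP[uy yv].
  by rewrite (le_trans au uy) (le_trans yv vb).
have in_uv_ab y : y \in `]u, v[ -> a < y < b.
  rewrite in_itv /= => /andP[uy yv].
  by rewrite (le_lt_trans au uy) (lt_le_trans yv vb).
have [c /in_uv_ab cab ->] := MVT uv (fun y yuv => gd y (in_uv_ab y yuv))
  (continuous_subspaceW sub_uv_ab gc).
by rewrite normrM ler_wpM2r // dgM.
Qed.

Lemma ode_zero_local m n (X : R -> 'M[R]_(m, n))
    (L : R -> 'M[R]_(m, n) -> 'M[R]_(m, n)) (a b c d K : R) :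
  {within `[a, b], continuous X} ->
  (forall y, a < y < b -> forall i j,
     is_derive y 1 (fun t => X t i j) (L y (X y) i j)) ->
  0 <= K -> (forall y, a < y < b -> forall Y, `|L y Y| <= K * `|Y|) ->
  K * d < 1 -> (forall y, a <= y <= b -> `|y - c| <= d) ->
  a <= c <= b -> X c = 0 -> forall y, a <= y <= b -> X y = 0.
Proof.
move=> Xc Xd K0 LK Kd1 dist_c cab Xc0.
have d0 : 0 <= d by apply: le_trans (dist_c c cab); rewrite subrr normr0.
have ab : a <= b by case/andP: cab => ac cb; exact: le_trans ac cb.
have normXc : {within `[a, b], continuous (fun t => `|X t|)}.
  by move=> y; apply: cvg_norm; exact: Xc.
have [p + Xp_max] := EVT_max ab normXc; rewrite in_itv /= => pab.
(* mean value theorem for each entry between [c] and the maximiser [p] *)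
have Xp_le : `|X p| <= K * d * `|X p|.
  apply: mx_norm_le => [|i j]; first by rewrite !mulr_ge0.
  have Xij_c : {within `[a, b], continuous (fun t => X t i j)}.
    by move=> y; exact: cvg_comp _ _ (Xc y) (@coord_continuous R m n i j (X y)).
  have dXij y : a < y < b -> `|L y (X y) i j| <= K * `|X p|.
    move=> yab; apply: le_trans (ler_mx_norm_entry _ i j) _.
    apply: le_trans (LK y yab _) _; rewrite ler_wpM2l // Xp_max // in_itv /=.
    by case/andP: yab => ay yb; rewrite !ltW.
  have := ler_norm_sub_derive Xij_c (fun y yab => Xd y yab i j) dXij cab pab.
  rewrite Xc0 mxE subr0 => /le_trans; apply.
  by rewrite mulrAC ler_wpM2r // ler_wpM2l // dist_c.
have Xp0 : `|X p| <= 0 by have := normr_ge0 (X p); nra.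
move=> y yab; apply/eqP; rewrite -normr_le0; apply: le_trans Xp0.
by apply: Xp_max; rewrite in_itv.
Qed.

Section solution_on_interval.
Variables (m n : nat) (J : set R) (L : R -> 'M[R]_(m, n) -> 'M[R]_(m, n)).
Variable X : R -> 'M[R]_(m, n).
Hypothesis J_itv : is_interval J.
Hypothesis X_sol : forall y, J y -> has_deriv_within J X y (L y (X y)).

Lemma ode_zero_step (a b c d K : R) :
  (forall y, a <= y <= b -> J y) ->
  0 <= K -> (forall y, a <= y <= b -> forall Y, `|L y Y| <= K * `|Y|) ->
  K * d < 1 -> a <= c <= b -> X c = 0 ->
  forall y, a <= y <= b -> `|y - c| <= d -> X y = 0.
Proof.
move=> abJ K0 LK Kd1 /andP[ac cb] Xc0 y /andP[ay yb] yc.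
have d0 : 0 <= d := le_trans (normr_ge0 _) yc.
move: yc; rewrite ler_distl => /andP[cdy ycd].
pose l := Num.max a (c - d); pose r := Num.min b (c + d).
have in_ab z : l <= z <= r -> a <= z <= b.
  by rewrite ge_max le_min => /andP[/andP[az _] /andP[zb _]]; rewrite az zb.
have lrJ z : l <= z <= r -> J z by move/in_ab/abJ.
apply: (@ode_zero_local _ _ X L l r c d K) => //.
- apply: continuous_subspaceW (has_deriv_within_continuous X_sol) => z /=.
  by rewrite in_itv /=; exact: lrJ.
- move=> z zlr i j; have /andP[lz zr] := zlr.
  have Jz : J z by apply: lrJ; rewrite !ltW.
  apply: has_deriv_within_is_derive _ (has_deriv_within_entry (X_sol Jz)).
  have : z \in `]l, r[ by rewrite in_itv.
  move/near_in_itvoo; apply: filterS => w; rewrite in_itv /= => /andP[lw wr].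
  by apply: lrJ; rewrite !ltW.
- by move=> z /andP[lz zr]; apply: LK; apply: in_ab; rewrite !ltW.
- move=> z; rewrite ge_max le_min ler_distl.
  by move=> /andP[/andP[_ ->] /andP[_ ->]].
- by rewrite ge_max le_min ac cb lerBlDr lerDl d0.
- by rewrite ge_max le_min ay yb cdy ycd.
Qed.

Lemma ode_zero_segment (a b c K : R) :
  (forall y, a <= y <= b -> J y) ->
  0 <= K -> (forall y, a <= y <= b -> forall Y, `|L y Y| <= K * `|Y|) ->
  a <= c <= b -> X c = 0 -> forall y, a <= y <= b -> X y = 0.
Proof.
move=> abJ K0 LK cab Xc0; have /andP[ac cb] := cab.
pose d := (2 * (K + 1))^-1.
have d0 : 0 < d by rewrite invr_gt0; lra.
have Kd1 : K * d < 1 by rewrite ltr_pdivrMr ?mul1r; lra.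
have step := ode_zero_step abJ K0 LK Kd1.
suff zero_within k y : a <= y <= b -> `|y - c| <= k%:R * d -> X y = 0.
  move=> y yab; have /andP[ay yb] := yab.
  have yc_ba : `|y - c| <= b - a by rewrite ler_distl; apply/andP; split; lra.
  have ba_d : 0 <= (b - a) / d.
    by rewrite divr_ge0 ?subr_ge0 ?(le_trans ac cb) ?ltW.
  apply: (zero_within (Num.Def.archi_bound ((b - a) / d))) => //.
  by apply: le_trans yc_ba _; rewrite -ler_pdivrMr // ltW // archi_boundP.
elim: k y => [|k IHk] y yab.
  by rewrite mul0r normr_le0 subr_eq0 => /eqP ->.
rewrite -natr1 mulrDl mul1r => yck.
have [ycd|ycd] := leP `|y - c| d; first exact: step _ cab Xc0 _ yab ycd.
have /andP[ay yb] := yab.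
have [cy|yc] := leP c y.
- rewrite ger0_norm ?subr_ge0 // in yck ycd.
  have ydab : a <= y - d <= b by apply/andP; split; lra.
  have Xyd : X (y - d) = 0 by apply: IHk ydab _; rewrite ger0_norm; lra.
  apply: step ydab Xyd _ yab _.
  by rewrite opprB addrC subrK ger0_norm ?lexx ?ltW.
- rewrite ltr0_norm ?subr_lt0 // in yck ycd.
  have ydab : a <= y + d <= b by apply/andP; split; lra.
  have Xyd : X (y + d) = 0 by apply: IHk ydab _; rewrite ltr0_norm; lra.
  apply: step ydab Xyd _ yab _.
  by rewrite opprD addrA subrr sub0r normrN ger0_norm ?lexx ?ltW.
Qed.

Lemma ode_zero :
  (forall a b, J a -> J b -> exists2 K, 0 <= K &
     forall y, a <= y <= b -> forall Y, `|L y Y| <= K * `|Y|) ->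
  forall s t, J s -> J t -> X s = 0 -> X t = 0.
Proof.
move=> L_bounded s t Js Jt Xs0.
have Jmin : J (Num.min s t) by rewrite /Num.min; case: ifP.
have Jmax : J (Num.max s t) by rewrite /Num.max; case: ifP.
have [K K0 LK] := L_bounded _ _ Jmin Jmax.
apply: (ode_zero_segment (is_interval_min_max J_itv Js Jt) K0 LK _ Xs0);
  by rewrite ge_min le_max lexx ?orbT.
Qed.

End solution_on_interval.

End ode_uniqueness.

Section linear_ode.
Context {R : realType}.

Lemma bounded_on_segment {V : normedModType R} (J : set R) (f : R -> V) a b :
  is_interval J -> {within J, continuous f} -> J a -> J b ->
  exists2 K, 0 <= K & forall y, a <= y <= b -> `|f y| <= K.
Proof.
move=> J_itv fc Ja Jb; have [ab|ba] := leP a b; last first.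
  exists 0 => // y /andP[ay yb].
  by have := lt_le_trans ba (le_trans ay yb); rewrite ltxx.
have abJ : `[a, b] `<=` J by move=> y /=; rewrite in_itv /=; exact: J_itv.
have normfc : {within `[a, b], continuous (fun y => `|f y|)}.
  by move=> y; apply: cvg_norm; exact: (continuous_subspaceW abJ fc).
have [c _ fc_max] := EVT_max ab normfc.
by exists `|f c| => // y yab; apply: fc_max; rewrite in_itv.
Qed.

Variables (J : set R) (m : nat) (A : R -> 'M[R]_m).
Hypotheses (J_itv : is_interval J) (A_cont : {within J, continuous A}).

Lemma linear_ode_zero n (X : R -> 'M[R]_(m, n)) :
  (forall y, J y -> has_deriv_within J X y (A y *m X y)) ->
  forall s t, J s -> J t -> X s = 0 -> X t = 0.
Proof.
move=> X_sol; apply: (ode_zero (L := fun y Y => A y *m Y) J_itv X_sol).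
move=> a b Ja Jb; have [K K0 AK] := bounded_on_segment J_itv A_cont Ja Jb.
exists (m%:R * K) => [|y yab Y]; first exact: mulr_ge0.
by apply: le_trans (mx_norm_mulmx _ _) _; rewrite ler_wpM2r // ler_wpM2l // AK.
Qed.

Lemma lyapunov_ode_zero (X : R -> 'M[R]_m) :
  (forall y, J y -> has_deriv_within J X y (A y *m X y + X y *m (A y)^T)) ->
  forall s t, J s -> J t -> X s = 0 -> X t = 0.
Proof.
move=> X_sol.
apply: (ode_zero (L := fun y Y => A y *m Y + Y *m (A y)^T) J_itv X_sol).
move=> a b Ja Jb; have [K K0 AK] := bounded_on_segment J_itv A_cont Ja Jb.
exists (m%:R * K + m%:R * K) => [|y yab Y]; first by rewrite addr_ge0 ?mulr_ge0.
apply: le_trans (ler_normD _ _) _; rewrite mulrDl lerD //.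
  apply: le_trans (mx_norm_mulmx _ _) _.
  by rewrite ler_wpM2r // ler_wpM2l // AK.
apply: le_trans (mx_norm_mulmx _ _) _; rewrite mulrAC ler_wpM2r // ler_wpM2l //.
exact: le_trans (mx_norm_trmx _) (AK _ yab).
Qed.

End linear_ode.

Section fundamental_theorem.
Context {R : realType}.
Variables (J : set R) (Phi g : R -> R).
Hypotheses (J_itv : is_interval J) (g_cont : {within J, continuous g}).
Hypothesis Phi_deriv : forall x, J x -> has_deriv_within J Phi x (g x).

Lemma Rintegral_has_deriv_within a b : J a -> J b -> a < b ->
  (\int[lebesgue_measure]_(x in `[a, b]) g x)%R = Phi b - Phi a.
Proof.
move=> Ja Jb ab.
have abJ : `[a, b] `<=` J by move=> y /=; rewrite in_itv /=; exact: J_itv.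
have Phi_is_derive x : a < x < b -> is_derive x 1 Phi (g x).
  move=> /andP[ax xb]; apply: has_deriv_within_is_derive _ (Phi_deriv _).
    have : x \in `]a, b[ by rewrite in_itv /= ax xb.
    by move/near_in_itvoo; apply: filterS => y /subset_itv_oo_cc/abJ.
  by apply: abJ; rewrite /= in_itv /= !ltW.
have Phi_cont :=
  continuous_subspaceW abJ (has_deriv_within_continuous Phi_deriv).
have [_ Phi_a Phi_b] := (continuous_within_itvP Phi ab).1 Phi_cont.
rewrite /Rintegral (@continuous_FTC2 _ g Phi a b ab) //.
- exact: continuous_subspaceW abJ g_cont.
- by split=> // x; rewrite in_itv /= => /Phi_is_derive [].
- by move=> x; rewrite in_itv /= derive1E => /Phi_is_derive [_ ->].
Qed.

Lemma oint_has_deriv_within s t : J s -> J t -> oint s t g = Phi t - Phi s.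
Proof.
move=> Js Jt; rewrite /oint; case: (ltgtP s t) => [st|ts|<-].
- exact: Rintegral_has_deriv_within.
- by rewrite Rintegral_has_deriv_within // opprB.
- by rewrite set_itv1 Rintegral_set1 subrr.
Qed.

End fundamental_theorem.

Lemma mxint_has_deriv_within {R : realType} m n (J : set R)
    (Phi g : R -> 'M[R]_(m, n)) s t :
  is_interval J -> {within J, continuous g} ->
  (forall x, J x -> has_deriv_within J Phi x (g x)) ->
  J s -> J t -> mxint s t g = Phi t - Phi s.
Proof.
move=> J_itv g_cont Phi_deriv Js Jt; apply/matrixP => i j; rewrite !mxE.
apply: (oint_has_deriv_within (J := J) (Phi := fun x => Phi x i j)) => //.
- move=> x; exact: cvg_comp _ _ (g_cont x) (@coord_continuous R m n i j (g x)).
- by move=> x Jx; exact: has_deriv_within_entry (Phi_deriv x Jx).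
Qed.

Lemma eq_mxint {R : realType} m n (f g : R -> 'M[R]_(m, n)) s t :
  (forall x, Num.min s t <= x <= Num.max s t -> f x = g x) ->
  mxint s t f = mxint s t g.
Proof.
move=> fg; apply/matrixP => i j; rewrite !mxE /oint.
have [st|ts] := leP s t.
- apply: eq_Rintegral => x; rewrite inE /= in_itv /= => /andP[sx xt].
  by rewrite fg // ge_min le_max sx xt ?orbT.
- congr -%R; apply: eq_Rintegral => x; rewrite inE /= in_itv /= => /andP[tx xs].
  by rewrite fg // ge_min le_max tx xs ?orbT.
Qed.

Section transition_matrix.
Context {R : realType}.
Variables (J : set R) (n : nat) (A : R -> 'M[R]_n) (Psi : R -> R -> 'M[R]_n).
Hypotheses (J_itv : is_interval J) (A_cont : {within J, continuous A}).
Hypothesis Psi_deriv : forall s t, J s -> J t ->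
  has_deriv_within J (fun t' => Psi t' s) t (A t *m Psi t s).
Hypothesis Psi_id : forall s, J s -> Psi s s = 1%:M.

Lemma transition_solution m (X : R -> 'M[R]_(n, m)) s t :
  (forall y, J y -> has_deriv_within J X y (A y *m X y)) -> J s -> J t ->
  X t = Psi t s *m X s.
Proof.
move=> X_sol Js Jt; apply/eqP; rewrite -subr_eq0; apply/eqP.
apply: (linear_ode_zero (X := fun y => X y - Psi y s *m X s) J_itv A_cont _
  Js Jt); last by rewrite Psi_id // mul1mx subrr.
move=> y Jy; have := has_deriv_withinB (X_sol y Jy)
  (has_deriv_within_mulmx (Psi_deriv Js Jy) (has_deriv_within_cst _ (X s) y)).
by rewrite mulmx0 addr0 -mulmxA -mulmxBr.
Qed.

Lemma transition_cocycle r s t :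
  J r -> J s -> J t -> Psi t s = Psi t r *m Psi r s.
Proof.
move=> Jr Js Jt; apply: (transition_solution (X := Psi^~ s)) => //.
by move=> y Jy; exact: Psi_deriv.
Qed.

Lemma transition_mulmx_swap s t : J s -> J t -> Psi t s *m Psi s t = 1%:M.
Proof. by move=> Js Jt; rewrite -transition_cocycle // Psi_id. Qed.

Lemma transition_unitmx s t : J s -> J t -> Psi t s \in unitmx.
Proof. by move=> Js Jt; case: (mulmx1_unit (transition_mulmx_swap Js Jt)). Qed.

Lemma invmx_transition s t : J s -> J t -> invmx (Psi t s) = Psi s t.
Proof.
move=> Js Jt; rewrite -[RHS](mulKmx (transition_unitmx Js Jt)).
by rewrite transition_mulmx_swap // mulmx1.
Qed.

Lemma has_deriv_within_transition_initial t tau : J t -> J tau ->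
  has_deriv_within J (Psi t) tau (- (Psi t tau *m A tau)).
Proof.
move=> Jt Jtau.
apply: (has_deriv_within_eq (f := fun y => Psi t tau *m invmx (Psi y tau))).
- exact: Jtau.
- move=> y; rewrite inE => Jy.
  by rewrite invmx_transition // -transition_cocycle.
have := has_deriv_within_mulmx (has_deriv_within_cst _ (Psi t tau) tau)
  (has_deriv_within_invmx (transition_unitmx Jtau Jtau) (Psi_deriv Jtau Jtau)).
by rewrite Psi_id // invmx1 !mulmx1 mul1mx add0r mulmxN.
Qed.

Lemma mxint_variation_of_constants m (J' : set R) (B : R -> 'M[R]_n)
    (X : R -> 'M[R]_(n, m)) s t :
  is_interval J' -> J' `<=` J -> {within J', continuous B} ->
  (forall y, J' y -> has_deriv_within J' X y ((A y + B y) *m X y)) ->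
  J' s -> J' t ->
  mxint s t (fun tau => Psi t tau *m B tau *m X tau) = X t - Psi t s *m X s.
Proof.
move=> J'_itv J'J B_cont X_sol J's J't; have Jt := J'J t J't.
have Psi_t_deriv y : J y -> has_deriv_within J (Psi t) y (- (Psi t y *m A y)).
  exact: has_deriv_within_transition_initial Jt.
have Psi_t_cont := continuous_subspaceW J'J
  (has_deriv_within_continuous Psi_t_deriv).
have X_cont := has_deriv_within_continuous X_sol.
rewrite -[X t]mul1mx -(Psi_id Jt).
apply: (mxint_has_deriv_within (J := J')
  (Phi := fun tau => Psi t tau *m X tau)).
- exact: J'_itv.
- move=> x.
  exact: cvg_mulmx (cvg_mulmx (Psi_t_cont x) (B_cont x)) (X_cont x).
- move=> y J'y; have := has_deriv_within_mulmx
    (has_deriv_within_subset J'J (Psi_t_deriv y (J'J y J'y))) (X_sol y J'y).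
  by rewrite mulNmx mulmxDl mulmxDr !mulmxA addKr.
- exact: J's.
- exact: J't.
Qed.

End transition_matrix.

Lemma invmx_gram_mulmx {R : fieldType} n (M : 'M[R]_n) :
  M \in unitmx -> invmx (M *m M^T) *m M = (invmx M)^T.
Proof.
move=> uM; have uMT : M^T \in unitmx by rewrite unitmx_tr.
rewrite trmx_inv -[LHS](mulmxK uMT) -[invmx _ *m M *m _]mulmxA.
by rewrite mulVmx ?mul1mx // unitmx_mul uM.
Qed.

Unset Implicit Arguments.

Theorem proposition7 (R : realType) (D : nat) (T : R)
  (F G : R -> 'M[R]_D) (Psi : R -> R -> 'M[R]_D) (Sigma : R -> 'M[R]_D)
  (I : set R) (Rm : R -> 'M[R]_D) (Psihat : R -> R -> 'M[R]_D)
  (P : R -> R -> 'M[R]_D) :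
  {within `[0, T], continuous F} ->
  {within `[0, T], continuous G} ->
  (* Psi is the transition matrix of F *)
  (forall s t, s \in `[0, T] -> t \in `[0, T] ->
     has_deriv_within `[0, T] (fun t' => Psi t' s) t (F t *m Psi t s)) ->
  (forall s, s \in `[0, T] -> Psi s s = 1%:M) ->
  (* Sigma solves the covariance ODE *)
  (forall tau, tau \in `[0, T] ->
     has_deriv_within `[0, T] Sigma tau
       (F tau *m Sigma tau + Sigma tau *m (F tau)^T + G tau *m (G tau)^T)) ->
  (* I is an interval in [0,T] on which Sigma is positive definite *)
  is_interval I -> I `<=` `[0, T] ->
  (forall tau, I tau -> posdef (Sigma tau)) ->
  (* Rm : continuously differentiable, invertible square root of Sigma *)
  (forall tau, I tau -> Rm tau \in unitmx) ->
  (forall tau, I tau -> Rm tau *m (Rm tau)^T = Sigma tau) ->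
  (forall tau, I tau ->
     has_deriv_within I Rm tau
       ((F tau + 2^-1 *: (G tau *m (G tau)^T *m invmx (Sigma tau))) *m Rm tau)) ->
  {within I, continuous (fun tau =>
     (F tau + 2^-1 *: (G tau *m (G tau)^T *m invmx (Sigma tau))) *m Rm tau)} ->
  (* Psihat is the transition matrix of Fhat = F + 1/2 G G^T Sigma^-1 (lambda = 0) *)
  (forall s t, I s -> I t ->
     has_deriv_within I (fun t' => Psihat t' s) t
       ((F t + 2^-1 *: (G t *m (G t)^T *m invmx (Sigma t))) *m Psihat t s)) ->
  (forall s, I s -> Psihat s s = 1%:M) ->
  (* P_{s tau} solves dP/dtau = Fhat P + P Fhat^T with P_{ss} = 0 *)
  (forall s tau, I s -> I tau ->
     has_deriv_within I (P s) tau
       ((F tau + 2^-1 *: (G tau *m (G tau)^T *m invmx (Sigma tau))) *m P s tau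
        + P s tau *m (F tau + 2^-1 *: (G tau *m (G tau)^T *m invmx (Sigma tau)))^T)) ->
  (forall s, I s -> P s s = 0) ->
  forall s t, I s -> I t -> forall (u eps : 'cV[R]_D),
    P s t = 0 /\
    Psi t s *m u + (Psihat t s - Psi t s) *m Rm s *m eps =
    Psi t s *m u +
      mxint s t (fun tau => 2^-1 *: (Psi t tau *m G tau *m (G tau)^T
                                     *m (invmx (Rm tau))^T)) *m eps.
Proof.
move=> F_cont G_cont Psi_deriv Psi_id Sigma_deriv I_itv I_sub _ Rm_unit Rm_gram
  Rm_deriv _ Psihat_deriv Psihat_id P_deriv P_id s t Is It u eps.
pose B tau := 2^-1 *: (G tau *m (G tau)^T *m invmx (Sigma tau)).
have J_itv : is_interval `[0, T] by exact: interval_is_interval.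
have Sigma_unit x : I x -> Sigma x \in unitmx.
  by move=> Ix; rewrite -Rm_gram // unitmx_mul unitmx_tr Rm_unit.
have B_cont : {within I, continuous B}.
  have within_I (f : R -> 'M[R]_D) x : {within `[0, T], continuous f} ->
      I x -> f @ within I (nbhs x) --> f x.
    by move=> /(continuous_subspaceW I_sub) /subspace_continuousP; apply.
  apply/subspace_continuousP => x Ix; have GI := within_I _ _ G_cont Ix.
  have SigmaI := within_I _ _ (has_deriv_within_continuous Sigma_deriv) Ix.
  apply: cvgZ; first exact: cvg_cst.
  exact: cvg_mulmx (cvg_mulmx GI (cvg_trmx GI))
    (cvg_invmx SigmaI (Sigma_unit x Ix)).
have Fhat_cont : {within I, continuous (fun tau => F tau + B tau)}.
  move=> x; apply: cvgD (B_cont x).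
  exact: continuous_subspaceW I_sub F_cont x.
split.
  exact: (lyapunov_ode_zero I_itv Fhat_cont (fun y Iy => P_deriv s y Is Iy)
    Is It (P_id s Is)).
rewrite mulmxBl -(transition_solution I_itv Fhat_cont Psihat_deriv Psihat_id
  Rm_deriv Is It).
rewrite -(mxint_variation_of_constants J_itv F_cont Psi_deriv Psi_id I_itv I_sub
  B_cont Rm_deriv Is It).
congr (_ + _ *m _); apply: eq_mxint => tau tau_st.
have Itau : I tau := is_interval_min_max I_itv Is It tau_st.
rewrite -scalemxAr -scalemxAl !mulmxA -[_ *m invmx (Sigma tau) *m _]mulmxA.
by rewrite -Rm_gram // invmx_gram_mulmx ?Rm_unit.
Qed.
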